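(* There exist a constant $c>0$ and, for infinitely many $T$, forecasts $\mathbf p^{(T)}\in[0,1]^T$ and outcomes $\mathbf x^{(T)}\in\{0,1\}^T$ such that $\mathrm{Cal}(\mathbf p^{(T)},\mathbf x^{(T)})\ge cT$, but for every bounded proper binary scoring rule $\ell$, $\mathrm{Reg}_\ell(\mathbf p^{(T)},\mathbf x^{(T)})=o(T)$ as $T\to\infty$.
   Context: A binary scoring rule is $\ell:[0,1]\times\{0,1\}\to\mathbb R$; with $\ell(p;q)=(1-q)\ell(p,0)+q\ell(p,1)$ it is proper if $\ell(p;p)\le\ell(p';p)$ for all $p,p'\in[0,1]$, and bounded if its values lie in $[-1,1]$. For $\mathbf x\in\{0,1\}^T$, $\mathbf p\in[0,1]^T$ and $\beta=\frac1T\sum_tx_t$, $\mathrm{Reg}_\ell(\mathbf p,\mathbf x)=\sum_t\ell(p_t,x_t)-\sum_t\ell(\beta,x_t)$. With $n_p=|\{t:p_t=p\}|$ and $m_p=|\{t:p_t=p,\ x_t=1\}|$, the calibration error is $\mathrm{Cal}(\mathbf p,\mathbf x)=\sum_p|p\,n_p-m_p|$ (sum over $p$ with $n_p>0$). *)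

From HB Require Import structures.
From mathcomp Require Import all_boot all_order all_algebra.
From mathcomp Require Export reals.
Set Implicit Arguments. Unset Strict Implicit. Unset Printing Implicit Defensive.
Import Order.TTheory GRing.Theory Num.Theory.
Local Open Scope ring_scope.

Section Defs.
Variable R : realType.

(* A binary scoring rule: l p y is l(p,y), outcome y : bool (false = 0, true = 1). *)
Definition exp_score (l : R -> bool -> R) (p q : R) : R :=
  (1 - q) * l p false + q * l p true.

Definition proper_scoring (l : R -> bool -> R) : Prop :=
  forall p p' : R, 0 <= p <= 1 -> 0 <= p' <= 1 ->
    exp_score l p p <= exp_score l p' p.

Definition bounded_scoring (l : R -> bool -> R) : Prop :=
  forall (p : R) (y : bool), 0 <= p <= 1 -> -1 <= l p y <= 1.

Definition base_rate (T : nat) (x : 'I_T -> bool) : R :=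
  (\sum_(t < T) (x t : nat)%:R) / T%:R.

Definition Reg (l : R -> bool -> R) (T : nat) (p : 'I_T -> R) (x : 'I_T -> bool) : R :=
  \sum_(t < T) l (p t) (x t) - \sum_(t < T) l (base_rate x) (x t).

Definition nfreq (T : nat) (p : 'I_T -> R) (v : R) : R :=
  (#|[pred t : 'I_T | p t == v]|)%:R.
Definition mfreq (T : nat) (p : 'I_T -> R) (x : 'I_T -> bool) (v : R) : R :=
  (#|[pred t : 'I_T | (p t == v) && x t]|)%:R.

Definition Cal (T : nat) (p : 'I_T -> R) (x : 'I_T -> bool) : R :=
  \sum_(v <- undup [seq p t | t <- enum 'I_T]) `| v * nfreq p v - mfreq p x v |.

End Defs.

From mathcomp Require Import all_boot all_order all_algebra.
From mathcomp Require Import reals classical_sets ring lra.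
Import Order.TTheory GRing.Theory Num.Theory.
Set Implicit Arguments. Unset Strict Implicit. Unset Printing Implicit Defensive.
Local Open Scope ring_scope.

(* Take T = 2k, forecast 1/2 + d on the first k rounds, whose outcomes are all 1,
   and 1/2 + d/2 on the last k rounds, whose outcomes are all 0, with
   d = 1/(T + 4) -> 0.  Every forecast misses its empirical frequency by about 1/2,
   so Cal is about T/2.  The base rate is 1/2, and the regret is k times
     [l(1/2+d,0) + l(1/2+d,1) - l(1/2,0) - l(1/2,1)] + [l(1/2+d/2,0) - l(1/2+d,0)].
   For a bounded proper rule, properness at 1/2 and at 1/2 + d pins the first
   bracket between 0 and 8d.  Properness also makes l(.,0) nondecreasing, so being
   bounded it has a right limit at 1/2, and the second bracket tends to 0. *)

Lemma nondecreasing_right_oscillation (R : realType) (f : R -> R) (a b e : R) :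
    0 < e -> a < b ->
    (forall u v, a < u -> u <= v -> v <= b -> f u <= f v) ->
    (exists m, forall u, a < u <= b -> m <= f u) ->
  exists2 c, a < c & forall u v, a < u <= c -> a < v <= c -> `|f u - f v| <= e.
Proof.
move=> e0 ab f_mono [m f_ge].
pose E : set R := fun y => exists2 u, a < u <= b & y = - f u.
have supE : has_sup E.
  split; first by exists (- f b), b; rewrite ?ab ?lexx.
  by exists (- m) => _ [u /f_ge mu ->]; rewrite lerN2.
have [_ [c /andP[ac cb] ->] near_sup] := sup_adherent e0 supE.
exists c => // u v.
have squeeze w : a < w <= c -> - f c <= - f w <= sup E.
  move=> /andP[aw wc]; rewrite lerN2 f_mono //=.
  by apply: sup_upper_bound => //; exists w; rewrite ?aw ?(le_trans wc cb).
move=> /squeeze/andP[? ?] /squeeze/andP[? ?].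
rewrite ler_norml; apply/andP; split; lra.
Qed.

Section ProperScoring.
Variables (R : realType) (l : R -> bool -> R).
Hypothesis l_proper : proper_scoring l.

Lemma proper_score0_le (p p' : R) :
  0 <= p -> p <= p' -> p' <= 1 -> l p false <= l p' false.
Proof.
move=> p0 pp' p'1.
have p01 : 0 <= p <= 1 by rewrite p0 (le_trans pp').
have p'01 : 0 <= p' <= 1 by rewrite p'1 (le_trans p0).
have := l_proper p01 p'01; have := l_proper p'01 p01; rewrite /exp_score.
have [-> //|ltpp'] := eqVneq p p'; have {ltpp'} : p < p' by rewrite lt_neqAle ltpp'.
set L0 := l p false; set L1 := l p true; set L0' := l p' false; set L1' := l p' true.
move=> at_p' at_p lt_pp'.
have slope : 0 <= (L1 - L1') - (L0 - L0').
  have dp : 0 < p' - p by rewrite subr_gt0.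
  rewrite -(pmulr_rge0 _ dp); lra.
have := mulr_ge0 p0 slope; lra.
Qed.

Hypothesis l_bounded : bounded_scoring l.

Lemma proper_score0_right_half_oscillation (e : R) : 0 < e ->
  exists2 c, 1/2 < c &
    forall u v, 1/2 < u <= c -> 1/2 < v <= c -> `|l u false - l v false| <= e.
Proof.
move=> e0; apply: (nondecreasing_right_oscillation (b := 1)) => //; first lra.
  by move=> u v hu uv v1; apply: proper_score0_le => //; lra.
exists (-1) => u /andP[hu u1].
by have /andP[] // : -1 <= l u false <= 1 by apply: l_bounded; apply/andP; split; lra.
Qed.

Lemma proper_sum_score_half_gap (d : R) : 0 <= d <= 1/2 ->
  `|l (1/2 + d) false + l (1/2 + d) true - (l (1/2) false + l (1/2) true)|
    <= 8 * d.
Proof.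
move=> /andP[d0 dh].
have h01 : 0 <= (1/2 : R) <= 1 by apply/andP; split; lra.
have q01 : 0 <= 1/2 + d <= 1 by apply/andP; split; lra.
have := l_proper h01 q01; have := l_proper q01 h01; rewrite /exp_score.
have /andP[? ?] := l_bounded false q01; have /andP[? ?] := l_bounded true q01.
have /andP[? ?] := l_bounded false h01; have /andP[? ?] := l_bounded true h01.
move=> at_q at_half.
(* properness at [1/2 + d] bounds half the gap by [d] times a difference of scores *)
have gap : d * ((l (1/2 + d) false - l (1/2) false) - (l (1/2 + d) true - l (1/2) true))
    <= d * 4 by rewrite ler_wpM2l //; lra.
rewrite ler_norml; apply/andP; split; lra.
Qed.

End ProperScoring.

Section TwoBlocks.
Variables (R : realType) (T k : nat).

Definition block_forecast (u v : R) : 'I_T -> R :=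
  fun t => if (t < k)%N then u else v.
Definition block_outcome : 'I_T -> bool := fun t => (t < k)%N.

Hypothesis kT : (k <= T)%N.

Lemma sum_block (V : nmodType) (F G : V) :
  \sum_(t < T) (if (t < k)%N then F else G) = F *+ k + G *+ (T - k).
Proof.
rewrite -(big_mkord xpredT (fun t => if (t < k)%N then F else G)).
rewrite (big_cat_nat (leq0n k) kT) /=.
rewrite (eq_big_nat _ _ (F2 := fun _ => F)); last by move=> i /andP[_ ->].
rewrite [X in _ + X](eq_big_nat _ _ (F2 := fun _ => G)); last first.
  by move=> i /andP[ki _]; rewrite ltnNge ki.
by rewrite !sumr_const_nat subn0.
Qed.

Lemma card_block_head : #|[pred t : 'I_T | (t < k)%N]| = k.
Proof.
rewrite -sum1_card big_mkcond /=.
under eq_bigr do rewrite inE.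
by rewrite (sum_block (V := nat)) mul0rn addr0 natn.
Qed.

Lemma base_rate_block : base_rate R block_outcome = k%:R / T%:R.
Proof.
rewrite /base_rate (eq_bigr (fun t : 'I_T => if (t < k)%N then 1 else 0)).
  by rewrite sum_block mul0rn addr0.
by move=> t _; rewrite /block_outcome; case: (t < k)%N.
Qed.

Lemma Reg_block (l : R -> bool -> R) (u v : R) :
  Reg l (block_forecast u v) block_outcome =
    (l u true - l (k%:R / T%:R) true) *+ k
    + (l v false - l (k%:R / T%:R) false) *+ (T - k).
Proof.
rewrite /Reg base_rate_block -sumrB -sum_block.
by apply: eq_bigr => t _; rewrite /block_forecast /block_outcome; case: (t < k)%N.
Qed.

End TwoBlocks.

Arguments block_forecast {R} T k u v.
Arguments block_outcome : clear implicits.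

Lemma Cal_block (R : realType) (T k : nat) (u v : R) :
    u != v -> (0 < k)%N -> (k < T)%N ->
  Cal (block_forecast T k u v) (block_outcome T k)
    = `|u * k%:R - k%:R| + `|v * (T - k)%:R|.
Proof.
move=> uv k0 ltkT; have kT := ltnW ltkT.
have head t : (block_forecast T k u v t == u) = (t < k)%N.
  by rewrite /block_forecast; case: (t < k)%N; rewrite ?eqxx // eq_sym (negbTE uv).
have tail t : (block_forecast T k u v t == v) = ~~ (t < k)%N.
  by rewrite /block_forecast; case: (t < k)%N; rewrite ?eqxx // (negbTE uv).
have range : perm_eq (undup [seq block_forecast T k u v t | t <- enum 'I_T]) [:: u; v].
  apply: uniq_perm; rewrite ?undup_uniq /= ?inE ?andbT // => w.
  rewrite mem_undup !inE; apply/mapP/orP => [[t _ ->]|].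
    by rewrite /block_forecast; case: (t < k)%N; [left|right].
  by case=> /eqP ->; [exists (Ordinal (leq_trans k0 kT)) | exists (Ordinal ltkT)];
    rewrite ?mem_enum // /block_forecast /= ?k0 ?ltnn.
have n_head : #|[pred t : 'I_T | block_forecast T k u v t == u]| = k.
  by rewrite -[RHS](card_block_head kT); apply: eq_card => t; rewrite !inE head.
have m_head : #|[pred t | (block_forecast T k u v t == u) && block_outcome T k t]| = k.
  by rewrite -[RHS](card_block_head kT); apply: eq_card => t; rewrite !inE head andbb.
have n_tail : #|[pred t : 'I_T | block_forecast T k u v t == v]| = (T - k)%N.
  have := cardC [pred t : 'I_T | (t < k)%N]; rewrite card_block_head // card_ord.
  move=> sumT; apply: (canRL (addKn k)); rewrite -[in RHS]sumT; congr (_ + _).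
  by apply: eq_card => t; rewrite !inE tail.
have m_tail : #|[pred t | (block_forecast T k u v t == v) && block_outcome T k t]| = 0%N.
  by apply: eq_card0 => t; rewrite !inE tail /block_outcome andNb.
rewrite /Cal (perm_big _ range) big_cons big_seq1 /nfreq /mfreq.
by rewrite n_head m_head n_tail m_tail subr0.
Qed.

Definition drift (R : realType) (T : nat) : R := (T + 4)%:R^-1.
Arguments drift : clear implicits.

Lemma drift_gt0 (R : realType) (T : nat) : 0 < drift R T.
Proof. by rewrite invr_gt0 ltr0n addn4. Qed.

Lemma drift_le (R : realType) (T : nat) : drift R T <= 1/4.
Proof. by rewrite /drift mul1r lef_pV2 ?posrE ?ltr0n ?addn4 // ler_nat. Qed.

Lemma drift_small (R : realType) (e : R) : 0 < e ->
  exists N, forall T, (N <= T)%N -> drift R T <= e.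
Proof.
move=> e0; exists (Num.bound e^-1) => T NT.
rewrite /drift invf_ple ?posrE ?ltr0n ?addn4 //.
apply/ltW/(lt_le_trans (archi_boundP _)); first by rewrite invr_ge0 ltW.
by rewrite ler_nat (leq_trans NT) // -addn4 leq_addr.
Qed.

Definition half_forecast (R : realType) (T : nat) : 'I_T -> R :=
  block_forecast T T./2 (1/2 + drift R T) (1/2 + drift R T / 2).
Definition half_outcome (T : nat) : 'I_T -> bool := block_outcome T T./2.
Arguments half_forecast : clear implicits.
Arguments half_outcome : clear implicits.

Lemma half_forecast_in01 (R : realType) (T : nat) (t : 'I_T) :
  0 <= half_forecast R T t <= 1.
Proof.
have := drift_gt0 R T; have := drift_le R T.
by rewrite /half_forecast /block_forecast; case: ifP => _ *; apply/andP; split; lra.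
Qed.

Lemma Cal_half (R : realType) (T : nat) : ~~ odd T ->
  1/4 * T%:R <= Cal (half_forecast R T) (half_outcome T).
Proof.
move=> evenT; set k := T./2.
have T_kk : T = (k + k)%N by rewrite addnn even_halfK.
have T2k : T%:R = 2 * k%:R :> R by rewrite T_kk natrD mulr_natl mulr2n.
have [k0|k_gt0] := posnP k.
  by rewrite T2k k0 !mulr0; apply: sumr_ge0 => *; apply: normr_ge0.
have ltkT : (k < T)%N by rewrite T_kk -{1}[k]addn0 ltn_add2l.
have Tk : (T - k = k)%N by rewrite T_kk addnK.
have d0 := drift_gt0 R T; have d1 := drift_le R T.
rewrite /half_forecast /half_outcome -/k Cal_block //; last by apply/eqP; lra.
rewrite Tk T2k.
have : k%:R - (1/2 + drift R T) * k%:R <= `|(1/2 + drift R T) * k%:R - k%:R|.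
  by rewrite distrC ler_norm.
have := ler_norm ((1/2 + drift R T / 2) * k%:R).
have : 0 <= (1 - drift R T) * k%:R by rewrite mulr_ge0 //; lra.
lra.
Qed.

Lemma Reg_half (R : realType) (l : R -> bool -> R) (T : nat) : ~~ odd T ->
  Reg l (half_forecast R T) (half_outcome T) =
    (l (1/2 + drift R T) true - l (1/2) true
     + (l (1/2 + drift R T / 2) false - l (1/2) false)) *+ T./2.
Proof.
move=> evenT; set k := T./2.
have T_kk : T = (k + k)%N by rewrite addnn even_halfK.
have Tk : (T - k = k)%N by rewrite T_kk addnK.
rewrite /half_forecast /half_outcome -/k Reg_block; last by rewrite T_kk leq_addr.
rewrite Tk -mulrnDl; have [->|k_gt0] := posnP k; first by rewrite !mulr0n.
suff -> : k%:R / T%:R = 1/2 :> R by [].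
by rewrite T_kk natrD; field; rewrite -natrD pnatr_eq0 -lt0n addn_gt0 k_gt0.
Qed.

Lemma Reg_half_small (R : realType) (l : R -> bool -> R) :
    bounded_scoring l -> proper_scoring l -> forall eps : R, 0 < eps ->
  exists N, forall T, ~~ odd T -> (N <= T)%N ->
    `|Reg l (half_forecast R T) (half_outcome T)| <= eps * T%:R.
Proof.
move=> l_bounded l_proper eps eps0.
have [c c_gt osc] := proper_score0_right_half_oscillation l_proper l_bounded eps0.
have [|N drift_N] := drift_small (e := Num.min (eps / 8) (c - 1/2)).
  by rewrite lt_min; apply/andP; split; lra.
exists N => T evenT /drift_N; rewrite le_min => /andP[d_eps d_c].
have T2k : T%:R = 2 * (T./2)%:R :> R by rewrite -{1}(even_halfK evenT) -mul2n natrM.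
rewrite Reg_half // normrMn -[_ *+ T./2]mulr_natr T2k mulrA; apply: ler_wpM2r => //.
have d0 := drift_gt0 R T; have d1 := drift_le R T.
set d := drift R T in d_eps d_c d0 d1 *.
have gap : `|l (1/2 + d) false + l (1/2 + d) true - (l (1/2) false + l (1/2) true)|
    <= 8 * d by apply: proper_sum_score_half_gap => //; apply/andP; split; lra.
have near_half : `|l (1/2 + d / 2) false - l (1/2 + d) false| <= eps.
  by apply: osc; apply/andP; split; lra.
move: gap near_half; rewrite !ler_norml => /andP[? ?] /andP[? ?].
apply/andP; split; lra.
Qed.

Theorem lemma4p1 (R : realType) :
  exists c : R, 0 < c /\
  exists (S : nat -> bool) (p : forall T : nat, 'I_T -> R)
         (x : forall T : nat, 'I_T -> bool),
    (* S is infinite *)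
    (forall N : nat, exists T : nat, (N <= T)%N /\ S T) /\
    (forall T : nat, S T ->
       (forall t : 'I_T, 0 <= p T t <= 1) /\ c * T%:R <= Cal (p T) (x T)) /\
    (* for every bounded proper scoring rule, Reg = o(T) along S *)
    (forall l : R -> bool -> R, bounded_scoring l -> proper_scoring l ->
       forall eps : R, 0 < eps -> exists N : nat, forall T : nat,
         S T -> (N <= T)%N -> `| Reg l (p T) (x T) | <= eps * T%:R).
Proof.
exists (1/4); split; first lra.
exists (fun T => ~~ odd T), (half_forecast R), half_outcome.
split; first by move=> N; exists N.*2; rewrite odd_double -addnn leq_addr.
split; first by move=> T evenT; split; [exact: half_forecast_in01 | exact: Cal_half].
exact: Reg_half_small.
Qed.
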